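(* Let $K$ be an infinite field and let $A$ be a standard graded artinian $K$-algebra. Let $\ell, L \in [A]_1$ be general linear elements, and fix positive integers $b$ and $k$. (a) Assume $A$ has the Weak Lefschetz Property and $b \ge k$. If multiplication by $\ell^k$ has maximal rank in each degree both on $A$ and on $A/L^bA$, then multiplication by $L^b$ has maximal rank in each degree on $A/\ell^k A$. (b) If multiplication by $\ell^k$ has maximal rank in each degree on $A/L^bA$ and multiplication by $L^b$ has maximal rank in each degree on $A$, then multiplication by $L^b$ has maximal rank in each degree on $A/\ell^k A$.
   Context: For a graded algebra $B$ and a form $f$ of degree $e$, ''multiplication by $f$ has maximal rank in each degree'' means that for every integer $j$ the $K$-linear map $\times f: [B]_{j-e} \to [B]_j$ is injective or surjective. $A$ has the Weak Lefschetz Property (WLP) if for a general linear form $\ell$ multiplication by $\ell$ has maximal rank in each degree. ''General'' means belonging to a suitable nonempty Zariski open subset of the relevant parameter space. *)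

From HB Require Import structures.
From mathcomp Require Import all_boot all_order all_algebra.
From mathcomp Require Import mpoly.
Set Implicit Arguments. Unset Strict Implicit. Unset Printing Implicit Defensive.
Import GRing.Theory.
Local Open Scope ring_scope.

Section Defs.
Variables (K : fieldType) (n : nat).
Local Notation R := {mpoly K[n]}.

Definition infinite_field := forall s : seq K, exists x : K, x \notin s.

Definition hcomp (d : nat) (p : R) : R :=
  \sum_(m <- msupp p | mdeg m == d) p@_m *: 'X_[m].

Definition is_ideal (I : R -> Prop) : Prop :=
  [/\ I 0, (forall p q, I p -> I q -> I (p + q)) & (forall p q, I q -> I (p * q))].

Definition homog_ideal (I : R -> Prop) : Prop :=
  is_ideal I /\ forall p d, I p -> I (hcomp d p).

(* A = R/I is artinian: [A]_d = 0 for d large *)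
Definition artinian (I : R -> Prop) : Prop :=
  exists D : nat, forall d (p : R), (D <= d)%N -> p \is d.-homog -> I p.

Definition ideal_add (I : R -> Prop) (f : R) : R -> Prop :=
  fun p => exists i q, I i /\ p = i + q * f.

(* multiplication by f (homogeneous of degree e) on B = R/J, from [B]_i to
   [B]_(i+e), is injective, resp. surjective *)
Definition mult_inj (J : R -> Prop) (f : R) (i : nat) : Prop :=
  forall g : R, g \is i.-homog -> J (f * g) -> J g.
Definition mult_surj (J : R -> Prop) (f : R) (e i : nat) : Prop :=
  forall h : R, h \is (i + e)%N.-homog -> exists g : R, g \is i.-homog /\ J (h - f * g).

(* multiplication by f of degree e has maximal rank in each degree on R/J.
   (Degrees j < e are trivial since the source [B]_(j-e) is 0.) *)
Definition max_rank (J : R -> Prop) (f : R) (e : nat) : Prop :=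
  forall i : nat, mult_inj J f i \/ mult_surj J f e i.

Definition linform (c : 'I_n -> K) : R := \sum_(i < n) c i *: 'X_i.

(* Weak Lefschetz Property of R/I: for a general linear form (outside the
   zero set of a nonzero polynomial on the coefficient space K^n), multiplication
   has maximal rank in each degree *)
Definition WLP (I : R -> Prop) : Prop :=
  exists P : {mpoly K[n]}, P != 0 /\
    forall c : 'I_n -> K, P.@[c] != 0 -> max_rank I (linform c) 1.

End Defs.

(* Write A = R/I.  Part (b) is a chase in each degree i: if L^b is onto
   [A]_(i+b) it stays onto modulo l^k; otherwise it is injective on [A]_i,
   and then surjectivity (resp. injectivity) of l^k on A/L^b in degree
   i + b - k gives surjectivity (resp. injectivity) of L^b on A/l^k.
   Part (a) follows the same pattern: if l^k is onto [A]_(i+b) then A/l^k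
   vanishes in degree i + b, and otherwise the WLP makes l^b injective on
   [A]_i.  Injectivity of multiplication by the b-th power of a linear form
   is the nonvanishing of a determinant polynomial in its coefficients, so
   it passes from l to the general L.  As A is artinian only finitely many
   degrees matter, and a product of nonzero polynomials describes "general". *)

From HB Require Import structures.
From mathcomp Require Import all_boot all_order all_algebra.
From mathcomp Require Import mpoly.
From mathcomp Require Import ring zify.
From Stdlib Require Import Classical IndefiniteDescription.
Set Implicit Arguments. Unset Strict Implicit. Unset Printing Implicit Defensive.
Import GRing.Theory.
Local Open Scope ring_scope.

Section HomogeneousComponents.
Variables (K : fieldType) (n : nat).
Implicit Types (p q g h l : {mpoly K[n]}).

Lemma hcompE d p : hcomp d p = pihomog mdeg d p.
Proof. by []. Qed.

Lemma hcomp_dhomog d p : p \is d.-homog -> hcomp d p = p.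
Proof. by move=> hp; rewrite hcompE pihomog_dE. Qed.

Lemma hcompP d p : hcomp d p \is d.-homog.
Proof. by rewrite hcompE; apply: pihomogP. Qed.

Lemma hcompD d p q : hcomp d (p + q) = hcomp d p + hcomp d q.
Proof. by rewrite !hcompE pihomogD. Qed.

Lemma hcompXM d e (m : 'X_{1..n}) g : g \is e.-homog ->
  hcomp d ('X_[m] * g) = if mdeg m + e == d then 'X_[m] * g else 0.
Proof.
move=> hg; have hm : 'X_[m] * g \is (mdeg m + e).-homog.
  by apply: dhomogM => //; rewrite dhomogX.
have [<-|ne] := eqVneq (mdeg m + e)%N d; first by rewrite hcomp_dhomog.
by rewrite hcompE (pihomog_ne0 _ hm).
Qed.

Lemma hcompM d e q g : g \is e.-homog ->
  hcomp d (q * g) = if (e <= d)%N then hcomp (d - e) q * g else 0.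
Proof.
move=> hg; rewrite {1}[q]mpolyE mulr_suml.
have -> : hcomp d (\sum_(m <- msupp q) (q@_m *: 'X_[m] * g)) =
    \sum_(m <- msupp q) hcomp d (q@_m *: 'X_[m] * g).
  by rewrite hcompE raddf_sum.
under eq_bigr => m _ do
  rewrite -scalerAl hcompE linearZ /= -hcompE (hcompXM _ _ hg).
case: leqP => hed.
  rewrite hcompE pihomogE mulr_suml [RHS]big_mkcond /=; apply: eq_bigr => m _.
  rewrite -(eqn_add2r e) subnK //.
  by case: eqP => _; rewrite ?scaler0 ?mul0r // scalerAl.
rewrite big1 // => m _; case: eqP => [hm|_]; last by rewrite scaler0.
by move: hed; rewrite -hm ltnNge leq_addl.
Qed.

Lemma dhomogXU (t : 'I_n) : ('X_t : {mpoly K[n]}) \is 1.-homog.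
Proof. by apply/dhomogP => m /mem_msuppXP <-; apply: mdeg1. Qed.

Lemma linform_dhomog (c : 'I_n -> K) : linform c \is 1.-homog.
Proof. by apply: rpred_sum => t _; apply/dhomogZ/dhomogXU. Qed.

Lemma dhomog1Xn l k : l \is 1.-homog -> l ^+ k \is k.-homog.
Proof. by move/(dhomogMn k); rewrite mul1n. Qed.

Lemma linformXn_dhomog (c : 'I_n -> K) k : linform c ^+ k \is k.-homog.
Proof. exact/dhomog1Xn/linform_dhomog. Qed.

Lemma dhomog_expand d q : q \is d.-homog ->
  q = \sum_(m : 'X_{1..n < d.+1} | mdeg m == d) q@_m *: 'X_[m].
Proof.
move=> hq; rewrite -{1}(pihomog_dE hq) (@pihomogwE _ _ mdeg d d.+1 q) //.
rewrite msizeE; apply/bigmax_leqP_seq => m hm _.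
by rewrite ltnS (dhomog_mf hq hm).
Qed.

Lemma dhomog_sumXU d h : h \is d.+1.-homog ->
  exists hs : 'I_n -> {mpoly K[n]},
    (forall t, hs t \is d.-homog) /\ h = \sum_t 'X_t * hs t.
Proof.
move=> hh; rewrite {1}[h]mpolyE big_seq.
pose sumXU p := exists hs : 'I_n -> {mpoly K[n]},
  (forall t, hs t \is d.-homog) /\ p = \sum_t 'X_t * hs t.
apply: (@big_ind _ sumXU).
- exists (fun=> 0); split=> [t|]; first exact: dhomog0.
  by rewrite big1 // => t _; rewrite mulr0.
- move=> p q [hp [Hp ->]] [hq [Hq ->]]; exists (fun t => hp t + hq t).
  split=> [t|]; first exact: rpredD.
  by rewrite -big_split; apply: eq_bigr => t _; rewrite mulrDr.
move=> m hm; have md : mdeg m = d.+1 by apply: (dhomog_mf hh hm).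
have [t ht | m0] := pickP (fun t : 'I_n => (0 < m t)%N); last first.
  move: md; rewrite mdegE big1 // => t _.
  by move: (m0 t) => /= /negbT; rewrite lt0n negbK => /eqP.
have Em : m = (U_(t) + (m - U_(t)))%MM.
  apply/mnmP => j; rewrite mnmDE mnmBE mnm1E.
  by case: eqP => [<-|_]; rewrite ?subnKC // sub0n.
exists (fun t' => if t' == t then h@_m *: 'X_[m - U_(t)] else 0); split.
  move=> t'; case: ifP => _; last exact: dhomog0.
  apply: dhomogZ; rewrite dhomogX; apply/eqP.
  by move: md; rewrite {1}Em mdegD mdeg1 add1n => -[].
rewrite (bigD1 t) //= eqxx big1 ?addr0; last first.
  by move=> t' /negbTE ->; rewrite mulr0.
by rewrite -scalerAr; congr (_ *: _); rewrite [in LHS]Em mpolyXD.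
Qed.

End HomogeneousComponents.

Section HomogeneousIdeal.
Variables (K : fieldType) (n : nat) (I : {mpoly K[n]} -> Prop).
Hypothesis HI : homog_ideal I.
Implicit Types (p q f g h : {mpoly K[n]}).

Lemma ideal0 : I 0.
Proof. by case: HI => -[]. Qed.

Lemma idealD p q : I p -> I q -> I (p + q).
Proof. by case: HI => -[_ + _] _; apply. Qed.

Lemma idealMl p q : I q -> I (p * q).
Proof. by case: HI => -[_ _ +] _; apply. Qed.

Lemma idealN p : I p -> I (- p).
Proof. by rewrite -mulN1r; apply: idealMl. Qed.

Lemma idealB p q : I p -> I q -> I (p - q).
Proof. by move=> Ip /idealN; apply: idealD. Qed.

Lemma idealZ c p : I p -> I (c *: p).
Proof. by rewrite -mul_mpolyC; apply: idealMl. Qed.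

Lemma ideal_hcomp d p : I p -> I (hcomp d p).
Proof. by case: HI => _; apply. Qed.

Lemma ideal_sum (T : Type) (r : seq T) (P : pred T) (F : T -> {mpoly K[n]}) :
  (forall x, P x -> I (F x)) -> I (\sum_(x <- r | P x) F x).
Proof. by move=> h; apply: (big_ind I ideal0 idealD). Qed.

Lemma ideal_add_sub f p : I p -> ideal_add I f p.
Proof. by exists p, 0; rewrite mul0r addr0. Qed.

Lemma ideal_add_dhomog f e p d : f \is e.-homog -> p \is d.-homog ->
  ideal_add I f p ->
  exists i q, [/\ I i, q \is (d - e).-homog, ((d < e)%N -> q = 0)
                & p = i + q * f].
Proof.
move=> hf hp [i [q [Ii Ep]]]; subst p.
exists (hcomp d i), (if (e <= d)%N then hcomp (d - e) q else 0); split.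
- exact: ideal_hcomp.
- by case: ifP => _; [apply: hcompP | apply: dhomog0].
- by move=> hde; rewrite leqNgt hde.
- rewrite -{1}(hcomp_dhomog hp) hcompD (hcompM _ _ hf).
  by case: ifP => _; rewrite ?mul0r.
Qed.

End HomogeneousIdeal.

Section MaximalRank.
Variables (K : fieldType) (n : nat) (I : {mpoly K[n]} -> Prop).
Hypothesis HI : homog_ideal I.
Implicit Types (f g l : {mpoly K[n]}).

Lemma mult_surj_ideal_add f g b i :
  mult_surj I g b i -> mult_surj (ideal_add I f) g b i.
Proof.
move=> sg h hh; have [y [hy Iy]] := sg h hh.
by exists y; split=> //; apply: ideal_add_sub.
Qed.

(* If f maps onto degree i + b then [R/(I + (f))]_(i+b) = 0. *)
Lemma mult_surj_by_generator f g k b i : (k <= i + b)%N ->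
  mult_surj I f k (i + b - k) -> mult_surj (ideal_add I f) g b i.
Proof.
move=> hk sf h; rewrite -(subnK hk) => hh; have [y [hy Iy]] := sf h hh.
exists 0; split; first exact: dhomog0.
by exists (h - f * y), y; split=> //; rewrite mulr0 subr0 mulrC subrK.
Qed.

Lemma mult_surj_swap f g k b i : f \is k.-homog -> g \is b.-homog ->
  (k <= i + b)%N -> mult_surj (ideal_add I g) f k (i + b - k) ->
  mult_surj (ideal_add I f) g b i.
Proof.
move=> hf hg hk sf h hh.
have [y [hy Iy]] :
    exists y, y \is (i + b - k).-homog /\ ideal_add I g (h - f * y).
  by apply: sf; rewrite subnK.
have hd : h - f * y \is (i + b).-homog.
  by apply: rpredB => //; rewrite -(subnKC hk); apply: dhomogM.
have [j [z [Ij hz _ E]]] := ideal_add_dhomog HI hg hd Iy.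
rewrite addnK in hz; exists z; split=> //.
by exists j, y; split=> //; rewrite -[h](subrK (f * y)) E; ring.
Qed.

(* If g x = f y modulo I, then y lies in I + (g) by injectivity of f on
   R/(I + (g)); writing y = g z modulo I, injectivity of g on R/I gives
   x = f z modulo I. *)
Lemma mult_inj_swap f g k b i : f \is k.-homog -> g \is b.-homog ->
  mult_inj I g i ->
  ((k <= i + b)%N -> mult_inj (ideal_add I g) f (i + b - k)) ->
  mult_inj (ideal_add I f) g i.
Proof.
move=> hf hg ig if_ x hx Igx.
have hgx : g * x \is (i + b).-homog by rewrite addnC; apply: dhomogM.
have [j [y [Ij hy y0 E]]] := ideal_add_dhomog HI hf hgx Igx.
have [hk|hk] := leqP k (i + b); last first.
  apply: ideal_add_sub; apply: ig => //.
  by rewrite E y0 // mul0r addr0.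
have Iy : ideal_add I g y.
  apply: (if_ hk y hy); exists (- j), x; split; first exact: idealN.
  by rewrite mulrC (mulrC x) E; ring.
have [j' [z [Ij' hz z0 E']]] := ideal_add_dhomog HI hg hy Iy.
have hu : x - f * z \is i.-homog.
  apply: rpredB => //; have [hki|hki] := leqP k i.
    have -> : i = (k + (i + b - k - b))%N by rewrite subnAC addnK subnKC.
    exact: dhomogM.
  by rewrite z0 ?mulr0 ?dhomog0 // ltn_subLR // ltn_add2r.
have Iu : I (x - f * z).
  apply: ig => //; have -> : g * (x - f * z) = j + f * j'.
    by rewrite mulrBr E E'; ring.
  by apply: idealD => //; apply: idealMl.
by exists (x - f * z), z; split=> //; rewrite mulrC subrK.
Qed.

Lemma mult_surjM f g a c e : mult_surj I f a e -> mult_surj I g c (e + a) ->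
  mult_surj I (g * f) (a + c) e.
Proof.
move=> sf sg h; rewrite addnA => hh.
have [y [hy Iy]] := sg h hh; have [z [hz Iz]] := sf y hy.
exists z; split=> //; have -> : h - g * f * z = (h - g * y) + g * (y - f * z).
  by ring.
by apply: idealD => //; apply: idealMl.
Qed.

Lemma mult_injM f g d e : f \is d.-homog -> mult_inj I f e ->
  mult_inj I g (e + d) -> mult_inj I (g * f) e.
Proof.
move=> hf if_ ig z hz Iz; apply: if_ => //; apply: ig; last by rewrite mulrA.
by rewrite addnC; apply: dhomogM.
Qed.

(* R is generated in degree 1, so [R]_(e+2) = sum_t X_t [R]_(e+1). *)
Lemma mult_surj_linearS l e : l \is 1.-homog ->
  mult_surj I l 1 e -> mult_surj I l 1 e.+1.
Proof.
move=> hl sl h; rewrite addn1 => /dhomog_sumXU [hs [hhs ->]].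
pose reached p := exists g, g \is e.+1.-homog /\ I (p - l * g).
apply: (@big_ind _ reached).
- by exists 0; split; [apply: dhomog0 | rewrite mulr0 subr0; apply: ideal0].
- move=> p q [g1 [h1 I1]] [g2 [h2 I2]]; exists (g1 + g2).
  split; first exact: rpredD.
  have -> : p + q - l * (g1 + g2) = (p - l * g1) + (q - l * g2) by ring.
  exact: idealD.
move=> t _; have [y [hy Iy]] : exists y, y \is e.-homog /\ I (hs t - l * y).
  by apply: sl; rewrite addn1.
exists ('X_t * y); split; first by rewrite -add1n; apply/dhomogM/hy/dhomogXU.
have -> : 'X_t * hs t - l * ('X_t * y) = 'X_t * (hs t - l * y) by ring.
exact: idealMl.
Qed.

Lemma mult_surj_linear_up l e e' : l \is 1.-homog -> (e <= e')%N ->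
  mult_surj I l 1 e -> mult_surj I l 1 e'.
Proof.
move=> hl /subnK <-; elim: (e' - e)%N => [//|d IHd] sl.
by rewrite addSn; apply/mult_surj_linearS/IHd.
Qed.

Lemma mult_surj_linearXn l m e : l \is 1.-homog ->
  mult_surj I l 1 e -> mult_surj I (l ^+ m) m e.
Proof.
move=> hl; elim: m e => [|m IHm] e sl.
  move=> h; rewrite addn0 => hh; exists h; split=> //.
  by rewrite expr0 mul1r subrr; apply: ideal0.
rewrite exprSr -add1n; apply: mult_surjM => //.
by apply/IHm/(mult_surj_linear_up hl _ sl); rewrite addn1.
Qed.

Lemma mult_inj_linearXn l m e : l \is 1.-homog ->
  (forall j, (e <= j < e + m)%N -> mult_inj I l j) -> mult_inj I (l ^+ m) e.
Proof.
move=> hl; elim: m e => [|m IHm] e il.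
  by move=> z hz; rewrite expr0 mul1r.
rewrite exprSr; apply: (mult_injM hl); first by apply: il; lia.
by apply: IHm => j hj; apply: il; lia.
Qed.

End MaximalRank.

Section MaximalRankSwap.
Variables (K : fieldType) (n : nat) (I : {mpoly K[n]} -> Prop).
Hypothesis HI : homog_ideal I.
Implicit Types (f g l : {mpoly K[n]}).

Lemma max_rank_swap f g k b : f \is k.-homog -> g \is b.-homog ->
  max_rank (ideal_add I g) f k -> max_rank I g b ->
  max_rank (ideal_add I f) g b.
Proof.
move=> hf hg mf mg i.
have [ig|sg] := mg i; last by right; apply: mult_surj_ideal_add.
have [hk|hk] := leqP k (i + b); last first.
  left; apply: (mult_inj_swap HI hf hg ig) => hk'.
  by rewrite leqNgt hk in hk'.
have [if_|sf] := mf (i + b - k)%N.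
  by left; apply: (mult_inj_swap HI hf hg ig).
by right; apply: (mult_surj_swap HI hf hg).
Qed.

(* When l^k does not map onto degree i + b, no power of l maps onto an
   earlier degree either, so by maximal rank l is injective in degrees
   i, ..., i + b - k - 1 and l^b = l^k l^(b-k) is injective in degree i. *)
Lemma max_rank_swap_Lefschetz l g k b : l \is 1.-homog -> max_rank I l 1 ->
  (k <= b)%N -> g \is b.-homog ->
  max_rank I (l ^+ k) k -> max_rank (ideal_add I g) (l ^+ k) k ->
  (forall i, mult_inj I (l ^+ b) i -> mult_inj I g i) ->
  max_rank (ideal_add I (l ^+ k)) g b.
Proof.
move=> hl ml hkb hg mlk mlkg ig_of_ilb i.
have hk : (k <= i + b)%N by apply: leq_trans hkb (leq_addl _ _).
have hlk : l ^+ k \is k.-homog by apply: dhomog1Xn.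
have [slk|nslk] := classic (mult_surj I (l ^+ k) k (i + b - k)).
  by right; apply: mult_surj_by_generator slk.
have ilk : mult_inj I (l ^+ k) (i + b - k).
  by have [] := mlk (i + b - k)%N.
have [ilkg|slkg] := mlkg (i + b - k)%N; last first.
  by right; apply: (mult_surj_swap HI hlk hg).
left; apply: (mult_inj_swap HI hlk hg _ (fun=> ilkg)); apply: ig_of_ilb.
rewrite -(subnKC hkb) exprD; apply: (mult_injM (dhomog1Xn _ hl)).
  apply: mult_inj_linearXn => // j hj; have [//|slj] := ml j.
  case: nslk; apply: mult_surj_linearXn => //.
  by apply: (mult_surj_linear_up HI hl _ slj); lia.
by rewrite addnBA.
Qed.

End MaximalRankSwap.

Section LinearCombinations.
Variables (K : fieldType) (n : nat).
Local Notation R := {mpoly K[n]}.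
Implicit Types (x y : nat -> K) (W : seq R).

Definition lincomb x W : R := \sum_(j < size W) x j *: W`_j.

Lemma lincomb_rcons x W s :
  lincomb x (rcons W s) = lincomb x W + x (size W) *: s.
Proof.
rewrite /lincomb size_rcons big_ord_recr /= nth_rcons ltnn eqxx; congr (_ + _).
by apply: eq_bigr => j _; rewrite nth_rcons ltn_ord.
Qed.

Lemma eq_lincomb x y W : (forall j, (j < size W)%N -> x j = y j) ->
  lincomb x W = lincomb y W.
Proof. by move=> exy; apply: eq_bigr => j _; rewrite exy. Qed.

Lemma lincomb0 W : lincomb (fun=> 0) W = 0.
Proof. by rewrite /lincomb big1 // => j _; rewrite scale0r. Qed.

Lemma lincombD x y W :
  lincomb (fun j => x j + y j) W = lincomb x W + lincomb y W.
Proof.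
by rewrite /lincomb -big_split; apply: eq_bigr => j _; rewrite scalerDl.
Qed.

Lemma lincombZ c x W : lincomb (fun j => c * x j) W = c *: lincomb x W.
Proof.
by rewrite /lincomb scaler_sumr; apply: eq_bigr => j _; rewrite scalerA.
Qed.

Lemma lincomb_dhomog d x W : all (fun w => w \is d.-homog) W ->
  lincomb x W \is d.-homog.
Proof.
move=> /allP hW; apply: rpred_sum => j _; apply/dhomogZ/hW.
exact/mem_nth.
Qed.

End LinearCombinations.

Section BasisModulo.
Variables (K : fieldType) (n : nat) (I : {mpoly K[n]} -> Prop).
Hypothesis HI : homog_ideal I.
Local Notation R := {mpoly K[n]}.
Implicit Types (x : nat -> K) (W : seq R).

Definition indep_mod W :=
  forall x, I (lincomb x W) -> forall j, (j < size W)%N -> x j = 0.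

Definition spans_mod (P : R -> Prop) W :=
  forall p, P p -> exists x, I (p - lincomb x W).

Lemma indep_mod_rcons W s : indep_mod W ->
  ~ (exists x, I (s - lincomb x W)) -> indep_mod (rcons W s).
Proof.
move=> iW sW x; rewrite lincomb_rcons size_rcons => Ix.
have xs0 : x (size W) = 0.
  apply/eqP/contraT => xs_neq0; case: sW.
  exists (fun j => - (x (size W))^-1 * x j).
  have -> : s - lincomb (fun j => - (x (size W))^-1 * x j) W =
            (x (size W))^-1 *: (lincomb x W + x (size W) *: s).
    by rewrite lincombZ scalerDr scalerA mulVf // scale1r scaleNr opprK addrC.
  exact: idealZ.
rewrite xs0 scale0r addr0 in Ix.
by move=> j; rewrite ltnS leq_eqVlt => /orP[/eqP ->//|]; apply: iW.
Qed.

Lemma spans_mod_rcons P W s : spans_mod P W -> spans_mod P (rcons W s).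
Proof.
move=> sW p /sW [x Ix]; exists (fun j => if (j < size W)%N then x j else 0).
by rewrite lincomb_rcons ltnn scale0r addr0 (eq_lincomb (y := x)) // => j ->.
Qed.

Lemma spans_mod_rcons_last W s : spans_mod (fun p => p = s) (rcons W s).
Proof.
move=> p ->; exists (fun j => if j == size W then 1 else 0).
rewrite lincomb_rcons eqxx scale1r (eq_lincomb (y := fun=> 0)) ?lincomb0.
  by rewrite add0r subrr; apply: ideal0.
by move=> j hj; rewrite ltn_eqF.
Qed.

Lemma indep_mod_extract d (S : seq R) : all (fun p => p \is d.-homog) S ->
  exists W, [/\ all (fun w => w \is d.-homog) W, indep_mod W
              & spans_mod (fun p => p \in S) W].
Proof.
elim: S => [_|s S IHS /= /andP[hs hS]]; first by exists [::].
have [W [hW iW sW]] := IHS hS.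
have [ex|nex] := classic (exists x, I (s - lincomb x W)).
  by exists W; split=> // p; rewrite inE => /orP[/eqP ->|/sW].
exists (rcons W s); split.
- by rewrite all_rcons hs.
- exact: indep_mod_rcons.
move=> p; rewrite inE => /orP[/eqP|] hp.
  exact: (spans_mod_rcons_last W hp).
exact: (spans_mod_rcons s sW hp).
Qed.

Lemma basis_mod_exists d : exists W, [/\ all (fun w => w \is d.-homog) W,
  indep_mod W & spans_mod (fun p => p \is d.-homog) W].
Proof.
pose S := [seq ('X_[bmnm m] : R)
            | m <- enum [pred m : 'X_{1..n < d.+1} | mdeg m == d]].
have hS : all (fun p => p \is d.-homog) S.
  by apply/allP => p /mapP [m]; rewrite mem_enum => hm ->; rewrite dhomogX.
have [W [hW iW sW]] := indep_mod_extract hS; exists W; split=> // p hp.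
rewrite (dhomog_expand hp).
apply: (@big_ind _ (fun p => exists x, I (p - lincomb x W))).
- by exists (fun=> 0); rewrite lincomb0 subrr; apply: ideal0.
- move=> p1 p2 [x1 I1] [x2 I2].
  exists (fun j => x1 j + x2 j); rewrite lincombD.
  have -> : p1 + p2 - (lincomb x1 W + lincomb x2 W) =
            (p1 - lincomb x1 W) + (p2 - lincomb x2 W) by ring.
  exact: idealD.
move=> m hm; have [x Ix] : exists x, I ('X_[m] - lincomb x W).
  by apply: sW; apply: map_f; rewrite mem_enum.
by exists (fun j => p@_m * x j); rewrite lincombZ -scalerBr; apply: idealZ.
Qed.

End BasisModulo.

Section Coordinates.
Variables (K : fieldType) (n : nat) (I : {mpoly K[n]} -> Prop).
Hypothesis HI : homog_ideal I.
Local Notation R := {mpoly K[n]}.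
Variables (t : nat) (Y : seq R) (cm : 'X_{1..n} -> nat -> K).
Hypothesis cmP : forall m, mdeg m = t -> I ('X_[m] - lincomb (cm m) Y).

(* Coordinates of a degree-t form in [R/I]_t, computed linearly from the
   coordinates cm of the monomials. *)
Definition coord (q : R) (a : nat) : K :=
  \sum_(m : 'X_{1..n < t.+1} | mdeg m == t) q@_m * cm m a.

Lemma coord_sum s (x : nat -> K) (p : nat -> R) a :
  coord (\sum_(j < s) x j *: p j) a = \sum_(j < s) x j * coord (p j) a.
Proof.
rewrite /coord; under eq_bigr => m _ do rewrite raddf_sum mulr_suml.
rewrite exchange_big /=; apply: eq_bigr => j _.
by rewrite mulr_sumr; apply: eq_bigr => m _; rewrite mcoeffZ mulrA.
Qed.

Lemma coord_span q : q \is t.-homog -> I (q - lincomb (coord q) Y).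
Proof.
move=> hq; have -> : lincomb (coord q) Y =
    \sum_(m : 'X_{1..n < t.+1} | mdeg m == t) q@_m *: lincomb (cm m) Y.
  rewrite /lincomb /coord; under eq_bigr => a _ do rewrite scaler_suml.
  rewrite exchange_big /=; apply: eq_bigr => m _.
  by rewrite scaler_sumr; apply: eq_bigr => a _; rewrite scalerA.
rewrite {1}(dhomog_expand hq) -sumrB; apply: (ideal_sum HI) => m /eqP hm.
by rewrite -scalerBr; apply/(idealZ HI)/cmP.
Qed.

Lemma coord_eq0 q : indep_mod I Y -> q \is t.-homog -> I q ->
  forall a, (a < size Y)%N -> coord q a = 0.
Proof.
move=> iY hq Iq; apply: iY.
have -> : lincomb (coord q) Y = q - (q - lincomb (coord q) Y) by ring.
by apply: (idealB HI) => //; apply: coord_span.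
Qed.

End Coordinates.

Section MultiplicationMatrix.
Variables (K : fieldType) (n : nat) (I : {mpoly K[n]} -> Prop).
Hypothesis HI : homog_ideal I.
Local Notation R := {mpoly K[n]}.
Variables (b i : nat) (W Y : seq R) (cm : 'X_{1..n} -> nat -> K).
Hypotheses (hW : all (fun w => w \is i.-homog) W) (iW : indep_mod I W).
Hypothesis sW : spans_mod I (fun p => p \is i.-homog) W.
Hypothesis iY : indep_mod I Y.
Hypothesis cmP :
  forall m, mdeg m = (b + i)%N -> I ('X_[m] - lincomb (cm m) Y).

Lemma dhomog_linformXnM c x :
  linform c ^+ b * lincomb x W \is (b + i).-homog.
Proof. by apply: dhomogM; [apply: linformXn_dhomog | apply: lincomb_dhomog].
Qed.

(* The matrix of multiplication by (linform c)^b from [R/I]_i, with basis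
   W, to [R/I]_(b+i), with basis Y, acting on row vectors. *)
Definition mult_matrix (c : 'I_n -> K) : 'M[K]_(size W, size Y) :=
  \matrix_(j, a) coord (b + i) cm (linform c ^+ b * W`_j) a.

Lemma mult_matrix_row c (u : 'rV[K]_(size W)) (x : nat -> K) a :
  (forall j : 'I_(size W), x j = u 0 j) ->
  (u *m mult_matrix c) 0 a = coord (b + i) cm (linform c ^+ b * lincomb x W) a.
Proof.
move=> xu; rewrite !mxE /lincomb mulr_sumr.
under [in RHS]eq_bigr => j _ do rewrite -scalerAr.
rewrite (coord_sum _ _ _ x (fun j => linform c ^+ b * W`_j)).
by apply: eq_bigr => j _; rewrite mxE xu.
Qed.

Lemma row_free_mult_matrix c : mult_inj I (linform c ^+ b) i ->
  row_free (mult_matrix c).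
Proof.
move=> ic; apply: inj_row_free => u u0.
pose x j := if insub j is Some j' then u 0 j' else 0.
have xu (j : 'I_(size W)) : x j = u 0 j by rewrite /x valK.
have Ix : I (lincomb x W).
  apply: ic; first exact: lincomb_dhomog.
  have := coord_span HI cmP (dhomog_linformXnM c x).
  rewrite (eq_lincomb (x := coord _ _ _) (y := fun=> 0)) ?lincomb0 ?subr0 //.
  move=> a ha.
  by rewrite -(mult_matrix_row _ (Ordinal ha) xu) u0 mxE.
apply/matrixP => i0 j; rewrite ord1 mxE -xu.
exact: iW Ix j (ltn_ord j).
Qed.

Lemma mult_inj_row_free c : row_free (mult_matrix c) ->
  mult_inj I (linform c ^+ b) i.
Proof.
move=> rfc g hg Ig; have [x Ix] := sW hg.
have Ixb : I (linform c ^+ b * lincomb x W).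
  have -> : linform c ^+ b * lincomb x W =
            linform c ^+ b * g - linform c ^+ b * (g - lincomb x W) by ring.
  by apply: (idealB HI) => //; apply: (idealMl HI).
pose u := \row_(j < size W) x j.
have u0 : u = 0.
  apply: (row_free_inj rfc); rewrite mul0mx; apply/matrixP => i0 a.
  rewrite ord1 (@mult_matrix_row _ _ x) => [|j]; last by rewrite mxE.
  by rewrite mxE (coord_eq0 HI cmP iY (dhomog_linformXnM c x)).
rewrite (eq_lincomb (y := fun=> 0)) ?lincomb0 ?subr0 // in Ix => j hj.
by have := congr1 (fun v : 'rV_(size W) => v 0 (Ordinal hj)) u0; rewrite !mxE.
Qed.

(* The entries of mult_matrix are polynomial in the coefficients c: replace
   c by the variables, i.e. (linform c) by the generic linear form. *)
Definition generic_linform : {mpoly R[n]} := \sum_(t < n) ('X_t : R) *: 'X_t.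

Definition generic_mult_matrix : 'M[R]_(size W, size Y) :=
  \matrix_(j, a) \sum_(m : 'X_{1..n < (b + i).+1} | mdeg m == (b + i)%N)
    (generic_linform ^+ b * map_mpoly (@mpolyC n K) W`_j)@_m * (cm m a)%:MP.

Lemma generic_mult_matrixE c :
  map_mx (meval c) generic_mult_matrix = mult_matrix c.
Proof.
have evL : map_mpoly (meval c) generic_linform = linform c.
  rewrite raddf_sum; apply: eq_bigr => t _.
  by rewrite /= map_mpolyZ map_mpolyX; congr (_ *: _); apply: mevalXU.
have evC w : map_mpoly (meval c) (map_mpoly (@mpolyC n K) w) = w.
  by apply/mpolyP => m; rewrite !mcoeff_map_mpoly; apply: mevalC.
apply/matrixP => j a; rewrite !mxE rmorph_sum; apply: eq_bigr => m _.
by rewrite rmorphM /= mevalC -mcoeff_map_mpoly rmorphM rmorphXn /= evL evC.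
Qed.

(* If some c0 gives an injective map, then with B a right inverse of its
   matrix, det (mult_matrix c *m B) is a polynomial in c equal to 1 at c0. *)
Lemma mult_inj_generic c0 : mult_inj I (linform c0 ^+ b) i ->
  exists T : R, T != 0 /\
    forall c, T.@[c] != 0 -> mult_inj I (linform c ^+ b) i.
Proof.
move=> /row_free_mult_matrix /row_freeP [B hB].
pose T := \det (generic_mult_matrix *m map_mx (@mpolyC n K) B).
have evT c : T.@[c] = \det (mult_matrix c *m B).
  have evB : map_mx (meval c) (map_mx (@mpolyC n K) B) = B.
    by apply/matrixP => j a; rewrite !mxE mevalC.
  by rewrite -det_map_mx map_mxM generic_mult_matrixE evB.
exists T; split=> [|c].
  apply/eqP => T0; move: (evT c0).
  by rewrite T0 meval0 hB det1 => /eqP; rewrite eq_sym oner_eq0.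
rewrite evT -unitfE -unitmxE => /mulmxV BcV; apply/mult_inj_row_free/row_freeP.
by exists (B *m invmx (mult_matrix c *m B)); rewrite mulmxA.
Qed.

End MultiplicationMatrix.

Section GenericInjectivity.
Variables (K : fieldType) (n : nat) (I : {mpoly K[n]} -> Prop).
Hypothesis HI : homog_ideal I.
Local Notation R := {mpoly K[n]}.

Lemma mult_injXn_generic b i : exists T : R, T != 0 /\
  forall c c', T.@[c'] != 0 ->
    mult_inj I (linform c ^+ b) i -> mult_inj I (linform c' ^+ b) i.
Proof.
have [[c0 ic0]|no_c0] := classic (exists c0, mult_inj I (linform c0 ^+ b) i);
  last first.
  by exists 1; split=> [|c c' _ ic]; [apply: oner_neq0 | case: no_c0; exists c].
have [W [hW iW sW]] := basis_mod_exists HI i.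
have [Y [_ iY sY]] := basis_mod_exists HI (b + i).
have [cm cmP] : exists cm : 'X_{1..n} -> nat -> K,
    forall m, mdeg m = (b + i)%N -> I ('X_[m] - lincomb (cm m) Y).
  apply: (functional_choice
    (fun m x => mdeg m = (b + i)%N -> I ('X_[m] - lincomb x Y))) => m.
  have [hm|hm] := eqVneq (mdeg m) (b + i)%N; last first.
    by exists (fun=> 0) => hm'; rewrite hm' eqxx in hm.
  have hXm : ('X_[m] : R) \is (b + i).-homog by rewrite dhomogX; apply/eqP.
  by have [x Ix] := sY _ hXm; exists x.
have [T [T_neq0 T_inj]] := mult_inj_generic HI hW iW sW iY cmP ic0.
by exists T; split=> // c c' /T_inj.
Qed.

Lemma mult_inj_artinian D f i :
  (forall d p, (D <= d)%N -> p \is d.-homog -> I p) -> (D <= i)%N ->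
  mult_inj I f i.
Proof. by move=> artD hi g hg _; apply: artD hi hg. Qed.

Lemma mult_injXn_generic_artinian b : artinian I -> exists T : R, T != 0 /\
  forall c c', T.@[c'] != 0 ->
    forall i, mult_inj I (linform c ^+ b) i -> mult_inj I (linform c' ^+ b) i.
Proof.
move=> [D artD].
suff [T [T_neq0 T_inj]] : exists T : R, T != 0 /\ forall c c', T.@[c'] != 0 ->
    forall i, (i < D)%N -> mult_inj I (linform c ^+ b) i ->
    mult_inj I (linform c' ^+ b) i.
  exists T; split=> // c c' Tc' i; have [/T_inj|] := ltnP i D; first exact.
  by move=> hi _; apply: mult_inj_artinian hi.
elim: D {artD} => [|D [T [T_neq0 T_inj]]]; first by exists 1; rewrite oner_neq0.
have [TD [TD_neq0 TD_inj]] := mult_injXn_generic b D.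
exists (T * TD); split=> [|c c']; first by rewrite mulf_neq0.
rewrite mevalM mulf_eq0 negb_or => /andP[Tc' TDc'] i; rewrite ltnS leq_eqVlt.
by case/orP=> [/eqP ->|/T_inj]; [apply: TD_inj | apply].
Qed.

End GenericInjectivity.

Section RenameVariables.
Variables (K : fieldType) (n m : nat) (f : 'I_n -> 'I_m).

Definition mrename (Q : {mpoly K[n]}) : {mpoly K[m]} :=
  Q \mPo [tuple 'X_(f t) | t < n].

Lemma mrename_meval Q v : (mrename Q).@[v] = Q.@[v \o f].
Proof.
by rewrite comp_mpoly_meval; apply: meval_eq => t; rewrite tnth_mktuple mevalXU.
Qed.

Lemma mrename_eq0 Q : injective f -> (mrename Q == 0) = (Q == 0).
Proof.
move=> injf; apply/eqP/eqP => [Q0|->]; last exact: comp_mpoly0.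
pose unrename : m.-tuple {mpoly K[n]} :=
  [tuple if [pick t | f t == j] is Some t then 'X_t else 0 | j < m].
have <- : mrename Q \mPo unrename = Q.
  rewrite [RHS]mpolyE [mrename Q]comp_mpolyEX raddf_sum /=.
  apply: eq_bigr => mu _; rewrite comp_mpolyZ comp_mpolyX rmorph_prod /=.
  rewrite mpolyXE_id; congr (_ *: _); apply: eq_bigr => t _.
  rewrite rmorphXn /= tnth_mktuple comp_mpolyXU -tnth_nth tnth_mktuple.
  by case: pickP => [t' /eqP/injf -> // | /(_ t)]; rewrite eqxx.
by rewrite Q0 comp_mpoly0.
Qed.

End RenameVariables.

Theorem proposition3p1 (K : fieldType) (Kinf : infinite_field K)
  (n : nat) (I : {mpoly K[n]} -> Prop)
  (HI : homog_ideal I) (HA : artinian I)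
  (b k : nat) (hb : (0 < b)%N) (hk : (0 < k)%N) :
  exists P : {mpoly K[n + n]}, P != 0 /\
    forall v : 'I_(n + n) -> K, P.@[v] != 0 ->
      let l := linform (fun i => v (lshift n i)) in
      let L := linform (fun i => v (rshift n i)) in
      (* (a) *)
      (WLP I -> (k <= b)%N ->
         max_rank I (l ^+ k) k ->
         max_rank (ideal_add I (L ^+ b)) (l ^+ k) k ->
         max_rank (ideal_add I (l ^+ k)) (L ^+ b) b)
      /\
      (* (b) *)
      (max_rank (ideal_add I (L ^+ b)) (l ^+ k) k ->
         max_rank I (L ^+ b) b ->
         max_rank (ideal_add I (l ^+ k)) (L ^+ b) b).
Proof.
have [Q [Q_neq0 Q_WLP]] : exists Q : {mpoly K[n]}, Q != 0 /\
    (WLP I -> forall c, Q.@[c] != 0 -> max_rank I (linform c) 1).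
  have [[Q [Q_neq0 Q_WLP]]|noWLP] := classic (WLP I); first by exists Q.
  by exists 1; split=> [|/noWLP//]; apply: oner_neq0.
have [T [T_neq0 T_inj]] := mult_injXn_generic_artinian HI b HA.
exists (mrename (lshift n) Q * mrename (@rshift n n) T); split.
  by rewrite mulf_neq0 // mrename_eq0 //;
    [apply: lshift_inj | apply: rshift_inj].
move=> v; rewrite mevalM mulf_eq0 negb_or !mrename_meval => /andP[Qv Tv] l L.
split=> [wlp kb mlk mlkg | ].
  apply: (max_rank_swap_Lefschetz HI (linform_dhomog _) (Q_WLP wlp _ Qv) kb
            (linformXn_dhomog _ _) mlk mlkg).
  exact: T_inj Tv.
exact: (max_rank_swap HI (linformXn_dhomog _ _) (linformXn_dhomog _ _)).
Qed.
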